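(* Let $D=\tau_z h$ where $h$ is a Hermitian $2N\times 2N$ matrix and $\tau_z=\mathrm{diag}(\mathbb{1}_N,-\mathbb{1}_N)$, and assume $D$ is diagonalizable with all eigenvalues real. Let $\omega_0>0$ be such that no eigenvalue of $D$ equals $\pm\omega_0$, and let $W_+\subset\mathbb{C}^{2N}$ be the span of the eigenvectors of $D$ with eigenvalues $\omega>\omega_0$, of dimension $M$. Then the eigenvectors spanning $W_+$ may be chosen mutually orthogonal with respect to the symplectic form $\langle x|\tau_z|y\rangle$ and each with nonzero symplectic norm; let $R_+$ (resp. $R_-$) be the number of them with positive (resp. negative) symplectic norm $\langle w|\tau_z|w\rangle$, so $R_++R_-=M$. Then $W_+$ can be uniquely decomposed as a direct sum $W_+=W_{++}\oplus W_{+-}$, where $W_{++}$ and $W_{+-}$ are subspaces of dimensions $R_+$ and $R_-$ respectively, such that for all nonzero $w_+\in W_{++}$ and $w_-\in W_{+-}$: $$\operatorname{sgn}\langle w_\sigma|\tau_z|w_\sigma\rangle=\sigma\ (\sigma=\pm),\qquad \langle w_+|\tau_z|w_-\rangle=0,\qquad \langle w_+|w_-\rangle=0.$$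
   Context: $\langle\cdot|\cdot\rangle$ denotes the standard Hermitian inner product on $\mathbb{C}^{2N}$. In the physical setting, $h=h(\vec k)$ is the Bogoliubov–de Gennes matrix of a quadratic bosonic Hamiltonian at momentum $\vec k$ and $D$ is its dynamical matrix. *)

(* Vectors of C^(2N) are stored as row vectors 'rV[C]_(N+N)
   (so that MathComp's row-space theory, mxalgebra, can be used for subspaces);
   a matrix A acts on a vector v as on a column vector: A *m v^T. *)
From HB Require Import structures.
From mathcomp Require Import all_boot all_order all_algebra.
Set Implicit Arguments. Unset Strict Implicit. Unset Printing Implicit Defensive.
Import Order.TTheory GRing.Theory Num.Theory.
Local Open Scope ring_scope.

Section Defs.
Variable C : numClosedFieldType.
Variable N : nat.
Local Notation n := (N + N)%N.

Definition tauz : 'M[C]_n := block_mx 1%:M 0 0 (- 1%:M).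

Definition hip (x y : 'rV[C]_n) : C := \sum_(i < n) (x 0 i)^* * y 0 i.

Definition sympl (x y : 'rV[C]_n) : C := hip x (tauz *m y^T)^T.

Definition hermitian_mx (h : 'M[C]_n) : Prop := forall i j, h j i = (h i j)^*.

Definition eigvec (A : 'M[C]_n) (w : C) (v : 'rV[C]_n) : Prop :=
  v != 0 /\ A *m v^T = w *: v^T.

Definition is_span_of (P : 'rV[C]_n -> Prop) (W : 'M[C]_n) : Prop :=
  (forall v, P v -> (v <= W)%MS) /\
  (forall U : 'M[C]_n, (forall v, P v -> (v <= U)%MS) -> (W <= U)%MS).

Definition good_eigenbasis (A : 'M[C]_n) (w0 : C) (W : 'M[C]_n) (M : nat)
    (b : 'I_M -> 'rV[C]_n) : Prop :=
  [/\ forall i, exists2 w, w0 < w & eigvec A w (b i),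
      (\matrix_(i < M) b i == W)%MS,
      forall i j, i != j -> sympl (b i) (b j) = 0
    & forall i, sympl (b i) (b i) != 0].

Definition good_decomp (W Wpp Wpm : 'M[C]_n) (Rp Rm : nat) : Prop :=
  [/\ (Wpp + Wpm == W)%MS, mxdirect (Wpp + Wpm),
      \rank Wpp = Rp & \rank Wpm = Rm] /\
  [/\ forall w, (w <= Wpp)%MS -> w != 0 -> 0 < sympl w w,
      forall w, (w <= Wpm)%MS -> w != 0 -> sympl w w < 0
    & forall wp wm, (wp <= Wpp)%MS -> (wm <= Wpm)%MS -> wp != 0 -> wm != 0 ->
        sympl wp wm = 0 /\ hip wp wm = 0].

End Defs.

From Stdlib Require Import Classical.
From HB Require Import structures.
From mathcomp Require Import all_boot all_order all_algebra zify.
Set Implicit Arguments. Unset Strict Implicit. Unset Printing Implicit Defensive.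
Import Order.TTheory GRing.Theory Num.Theory Num.Def.
Local Open Scope ring_scope.

(** D = tau_z h is self-adjoint for the symplectic form, so eigenvectors of D with
    distinct real eigenvalues are symplectically orthogonal. As the eigenvectors of D span
    the whole space and those with eigenvalue > w0 span W_+, the symplectic form is
    nondegenerate on W_+. Splitting off an anisotropic vector and recursing in its
    symplectic orthogonal complement then builds orthogonal bases: with eigenvectors of D
    this gives the eigenbasis; with eigenvectors of the symplectic form relative to the
    inner product on W_+ (they exist over an algebraically closed field) it gives a basis
    orthogonal for both forms, whose vectors of positive and of negative norm span W_++
    and W_+-. Sylvester's law of inertia identifies their dimensions with R_+ and R_-, and
    any admissible decomposition contains every relative eigenvector of the matching sign,
    hence coincides with this one. *)

Section Form.
Variables (C : numClosedFieldType) (n : nat).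
Implicit Types (M G U V : 'M[C]_n) (x y z : 'rV[C]_n).

Definition form M x y := (map_mx conjC x *m M *m y^T) 0 0.

Definition self_adjoint M := (map_mx conjC M)^T = M.

Lemma formDl M x y z : form M (x + y) z = form M x z + form M y z.
Proof. by rewrite /form map_mxD !mulmxDl mxE. Qed.

Lemma formZl M a x y : form M (a *: x) y = a^* * form M x y.
Proof. by rewrite /form map_mxZ -!scalemxAl mxE. Qed.

Lemma formDr M x y z : form M x (y + z) = form M x y + form M x z.
Proof. by rewrite /form linearD mulmxDr mxE. Qed.

Lemma formZr M a x y : form M x (a *: y) = a * form M x y.
Proof. by rewrite /form linearZ -scalemxAr mxE. Qed.

Lemma formBr M x y z : form M x (y - z) = form M x y - form M x z.
Proof. by rewrite /form linearB mulmxBr !mxE. Qed.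

Lemma form0l M y : form M 0 y = 0.
Proof. by rewrite /form map_mx0 !mul0mx mxE. Qed.

Lemma form0r M x : form M x 0 = 0.
Proof. by rewrite /form trmx0 mulmx0 mxE. Qed.

Lemma formNm M x y : form (- M) x y = - form M x y.
Proof. by rewrite /form mulmxN mulNmx mxE. Qed.

Lemma form_suml M y (I : finType) (P : pred I) (F : I -> 'rV[C]_n) :
  form M (\sum_(i | P i) F i) y = \sum_(i | P i) form M (F i) y.
Proof. exact: (big_morph _ (fun x z => formDl M x z y) (form0l M y)). Qed.

Lemma form_sumr M x (I : finType) (P : pred I) (F : I -> 'rV[C]_n) :
  form M x (\sum_(i | P i) F i) = \sum_(i | P i) form M x (F i).
Proof. exact: (big_morph _ (formDr M x) (form0r M x)). Qed.

Lemma formC M x y : (form M x y)^* = form (map_mx conjC M)^T y x.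
Proof.
have -> : forall A : 'M[C]_1, (A 0 0)^* = (map_mx conjC A)^T 0 0.
  by move=> A; rewrite !mxE.
by rewrite !map_mxM map_mxCK !trmx_mul /form !map_trmx trmxK mulmxA.
Qed.

Lemma form_sym G x y : self_adjoint G -> form G y x = (form G x y)^*.
Proof. by move=> G_sa; rewrite formC G_sa. Qed.

Lemma form_real G x : self_adjoint G -> form G x x \is Num.real.
Proof. by move=> G_sa; rewrite CrealE -form_sym. Qed.

Lemma self_adjoint1 : self_adjoint 1%:M.
Proof. by rewrite /self_adjoint map_mx1 trmx1. Qed.

Lemma form1E x : form 1%:M x x = \sum_i (x 0 i)^* * x 0 i.
Proof. by rewrite /form mulmx1 mxE; apply: eq_bigr => i _; rewrite !mxE. Qed.

Lemma form1_ge0 x : 0 <= form 1%:M x x.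
Proof. by rewrite form1E sumr_ge0 // => i _; rewrite mulrC mul_conjC_ge0. Qed.

Lemma form1_eq0 x : (form 1%:M x x == 0) = (x == 0).
Proof.
apply/eqP/eqP => [|->]; last exact: form0l.
rewrite form1E => /psumr_eq0P x0; apply/rowP => i; rewrite mxE.
apply/eqP; rewrite -mul_conjC_eq0 mulrC x0 // => j _.
by rewrite mulrC mul_conjC_ge0.
Qed.

Lemma form1_gt0 x : x != 0 -> 0 < form 1%:M x x.
Proof. by rewrite lt_def form1_eq0 form1_ge0 andbT. Qed.

Lemma form_polar M x y : form M x x = 0 -> form M y y = 0 ->
    form M (x + y) (x + y) = 0 -> form M (x + 'i *: y) (x + 'i *: y) = 0 ->
  form M x y = 0.
Proof.
move=> xx yy; rewrite !(formDl, formDr, formZl, formZr) xx yy conjCi.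
rewrite !mulr0 !addr0 !add0r => /eqP; rewrite addr_eq0 => /eqP ->.
rewrite mulrN mulNr -opprD -mulr2n => /eqP.
by rewrite oppr_eq0 mulrn_eq0 mulf_eq0 (negbTE (neq0Ci C)) /= => /eqP ->; rewrite oppr0.
Qed.

Definition kerf M x : 'M[C]_n := kermx (map_mx conjC x *m M)^T.

Lemma sub_kerf M x y : (y <= kerf M x)%MS = (form M x y == 0).
Proof.
rewrite sub_kermx -{1}[y]trmxK -trmx_mul -trmx0 (inj_eq trmx_inj).
rewrite /form; set A := (_ *m _ *m _).
apply/eqP/eqP => [->|A0]; first by rewrite mxE.
by rewrite [A]mx11_scalar A0 raddf0.
Qed.

Definition nondeg_on G V :=
  forall x, (x <= V)%MS -> (forall y, (y <= V)%MS -> form G x y = 0) -> x = 0.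

Lemma nondeg_unitmx G : G \in unitmx -> nondeg_on G 1%:M.
Proof.
move=> G_unit x _ xG0; set z := map_mx conjC x *m G.
have /eqP : form 1%:M (map_mx conjC z) (map_mx conjC z) = 0.
  by rewrite -[RHS](xG0 (map_mx conjC z)) ?submx1 // /form map_mxCK mulmx1.
rewrite form1_eq0 map_mx_eq0 mulmx_free_eq0 ?row_free_unit // map_mx_eq0.
by move/eqP.
Qed.

Definition orth_proj G x y := y - (form G x y / form G x x) *: x.

Lemma orth_projK G x y : orth_proj G x y + (form G x y / form G x x) *: x = y.
Proof. exact: subrK. Qed.

Lemma orth_proj_kerf G x y : form G x x != 0 -> (orth_proj G x y <= kerf G x)%MS.
Proof. by move=> x_aniso; rewrite sub_kerf formBr formZr divfK ?subrr. Qed.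

Lemma orth_proj_sub G V x y :
  (x <= V)%MS -> (y <= V)%MS -> (orth_proj G x y <= V)%MS.
Proof. by move=> xV yV; rewrite addmx_sub ?eqmx_opp ?scalemx_sub. Qed.

Definition spanned_by (P : 'rV[C]_n -> Prop) U :=
  forall U', (forall v, (v <= U)%MS -> P v -> (v <= U')%MS) -> (U <= U')%MS.

Lemma spanned_by_form_eq0 (P : 'rV[C]_n -> Prop) M V x :
    spanned_by P V -> (forall v, (v <= V)%MS -> P v -> form M x v = 0) ->
  forall y, (y <= V)%MS -> form M x y = 0.
Proof.
move=> spanV xP y yV; apply/eqP; rewrite -sub_kerf (submx_trans yV) //.
by apply: spanV => v vV Pv; rewrite sub_kerf xP.
Qed.

Section Complement.
Variables (G V : 'M[C]_n) (x : 'rV[C]_n).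
Hypotheses (xV : (x <= V)%MS) (x_aniso : form G x x != 0).
Local Notation V' := (V :&: kerf G x)%MS.

Lemma orth_proj_capkerf y : (y <= V)%MS -> (orth_proj G x y <= V')%MS.
Proof. by move=> yV; rewrite sub_capmx orth_proj_sub ?orth_proj_kerf. Qed.

Lemma sub_capkerf_adds : (V <= V' + x)%MS.
Proof.
apply/rV_subP => y yV; rewrite -(orth_projK G x y) addmx_sub_adds //.
  exact: orth_proj_capkerf.
exact: scalemx_sub.
Qed.

Lemma rank_capkerf : (\rank V').+1 = \rank V.
Proof.
have x_notin : ~~ (x <= V')%MS.
  by rewrite sub_capmx sub_kerf (negbTE x_aniso) andbF.
have lt_rank : (\rank V' < \rank V)%N.
  by rewrite rank_ltmx // ltmxE capmxSl; apply: contra x_notin; apply: submx_trans.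
have := leq_trans (mxrankS sub_capkerf_adds) (mxrank_adds_leqif V' x).1.
by have := rank_leq_row x; lia.
Qed.

Lemma capkerf_adds_sub (A : 'M[C]_n) z :
  (A <= kerf G x)%MS -> (z <= kerf G x)%MS -> (z <= A + x)%MS -> (z <= A)%MS.
Proof.
move=> AK zK /sub_addsmxP [[u c] /= zE]; move: zK.
rewrite zE [c]mx11_scalar mul_scalar_mx.
have uAK : (u *m A <= kerf G x)%MS := submx_trans (submxMl u A) AK.
rewrite sub_kerf formDr formZr; move: uAK; rewrite sub_kerf => /eqP ->.
by rewrite add0r mulf_eq0 (negbTE x_aniso) orbF => /eqP ->; rewrite scale0r addr0 submxMl.
Qed.

Lemma nondeg_on_capkerf : self_adjoint G -> nondeg_on G V -> nondeg_on G V'.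
Proof.
move=> G_sa ndV z zV' zV'0; have zK : form G x z = 0.
  by apply/eqP; rewrite -sub_kerf (submx_trans zV' (capmxSr _ _)).
apply: ndV => [|y yV]; first exact: submx_trans zV' (capmxSl _ _).
have := zV'0 _ (orth_proj_capkerf yV).
by rewrite formBr formZr [form G z x]form_sym // zK conjC0 mulr0 subr0.
Qed.

Lemma spanned_by_capkerf (P : 'rV[C]_n -> Prop) : spanned_by P V ->
    (forall v, (v <= V)%MS -> P v -> orth_proj G x v = 0 \/ P (orth_proj G x v)) ->
  spanned_by P V'.
Proof.
move=> spanV proj_P U PU.
have V'K : (V' <= kerf G x)%MS := capmxSr _ _.
suff VU : (V <= (U :&: V') + x)%MS.
  apply/rV_subP => z zV'; rewrite (submx_trans _ (capmxSl U V')) //.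
  apply: capkerf_adds_sub (submx_trans (capmxSr _ _) V'K) (submx_trans zV' V'K) _.
  exact: submx_trans (submx_trans zV' (capmxSl _ _)) VU.
apply: spanV => v vV Pv; rewrite -(orth_projK G x v) addmx_sub_adds ?scalemx_sub //.
rewrite sub_capmx orth_proj_capkerf // andbT.
case: (proj_P v vV Pv) => [->|]; first by rewrite sub0mx.
by apply: PU; apply: orth_proj_capkerf.
Qed.

End Complement.
End Form.

Section OrthBasis.
Variables (C : numClosedFieldType) (n : nat) (G : 'M[C]_n).
Hypothesis G_sa : self_adjoint G.

Definition orth_basis (V : 'M[C]_n) k (b : 'I_k -> 'rV[C]_n) :=
  [/\ (\matrix_(i < k) b i == V)%MS,
      forall i j, i != j -> form G (b i) (b j) = 0
    & forall i, form G (b i) (b i) != 0].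

Lemma orth_basis_sub V k (b : 'I_k -> 'rV[C]_n) :
  orth_basis V b -> forall i, (b i <= V)%MS.
Proof. by case=> /andP [bV _] _ _ i; rewrite -(rowK b i) (submx_trans (row_sub _ _)). Qed.

Lemma orth_basis_cons V x k (b : 'I_k -> 'rV[C]_n) :
    (x <= V)%MS -> form G x x != 0 -> orth_basis (V :&: kerf G x)%MS b ->
  orth_basis V (fun i : 'I_k.+1 => if unlift ord0 i is Some j then b j else x).
Proof.
move=> xV x_aniso b_basis; have [/andP [_ V'b] b_orth b_aniso] := b_basis.
have b_sub j : (b j <= V :&: kerf G x)%MS := orth_basis_sub b_basis j.
have x_orth_b j : form G x (b j) = 0.
  by apply/eqP; rewrite -sub_kerf (submx_trans (b_sub j) (capmxSr _ _)).
set b1 := fun i => _.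
have b1_row i : (b1 i <= \matrix_(i < k.+1) b1 i)%MS by rewrite -{1}(rowK b1 i) row_sub.
split.
- apply/andP; split.
    apply/row_subP => i; rewrite rowK /b1; case: unliftP => [j|] _ //.
    exact: submx_trans (b_sub j) (capmxSl _ _).
  apply: submx_trans (sub_capkerf_adds xV x_aniso) _; rewrite addsmx_sub.
  apply/andP; split; last by rewrite [x](_ : _ = b1 ord0) ?b1_row // /b1 unlift_none.
  apply: submx_trans V'b _; apply/row_subP => j; rewrite rowK.
  by rewrite [b j](_ : _ = b1 (lift ord0 j)) ?b1_row // /b1 liftK.
- move=> i j; rewrite /b1.
  case: unliftP => [i' ->|->]; case: unliftP => [j' ->|->] //.
  + by rewrite (inj_eq lift_inj) => /b_orth.
  + by rewrite form_sym // x_orth_b conjC0.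
- by move=> i; rewrite /b1; case: unliftP.
Qed.

Variables (good : 'M[C]_n -> Prop) (Pr : 'M[C]_n -> 'rV[C]_n -> Prop).
Hypothesis good_split : forall V, good V -> V != 0 -> exists x,
  [/\ (x <= V)%MS, form G x x != 0, Pr V x, good (V :&: kerf G x)%MS
    & forall y, (y <= V :&: kerf G x)%MS -> Pr (V :&: kerf G x)%MS y -> Pr V y].

Lemma exists_orth_basis U : good U ->
  exists b : 'I_(\rank U) -> 'rV[C]_n, orth_basis U b /\ forall i, Pr U (b i).
Proof.
suff orth_basis_rank k : forall V, \rank V = k -> good V ->
    exists b : 'I_k -> 'rV[C]_n, orth_basis V b /\ forall i, Pr V (b i).
  exact: orth_basis_rank.
elim: k => [|k IH] V rV goodV.
  exists (fun _ => 0); split=> [|[]//]; split=> [|[]//|[]//].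
  have -> : V = 0 by apply/eqP; rewrite -mxrank_eq0 rV.
  by rewrite [\matrix_(i < 0) _]flatmx0 !sub0mx.
have [|x [xV x_aniso Pr_x goodV' Pr_lift]] := good_split goodV.
  by rewrite -mxrank_eq0 rV.
have rV' : \rank (V :&: kerf G x)%MS = k by apply: succn_inj; rewrite rank_capkerf.
have [b [b_basis Pr_b]] := IH _ rV' goodV'.
exists (fun i => if unlift ord0 i is Some j then b j else x).
split=> [|i]; first exact: orth_basis_cons.
case: unliftP => [j|] _ //.
by apply: Pr_lift; [exact: orth_basis_sub b_basis j | exact: Pr_b].
Qed.

End OrthBasis.

Section RelativeEigenvectors.
Variables (C : numClosedFieldType) (n : nat) (G : 'M[C]_n).
Implicit Types (V : 'M[C]_n) (x y : 'rV[C]_n).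

Definition rel_eigvec V x :=
  exists mu, forall y, (y <= V)%MS -> form G x y = mu * form 1%:M x y.

Lemma exists_rel_eigvec V : V != 0 -> exists2 x, (x <= V)%MS & x != 0 /\ rel_eigvec V x.
Proof.
move=> V0; set B := row_base V.
have formB M (c d : 'rV[C]_(\rank V)) :
    form M (c *m B) (d *m B) =
    (map_mx conjC c *m (map_mx conjC B *m M *m B^T) *m d^T) 0 0.
  by rewrite /form map_mxM trmx_mul !mulmxA.
set Gram1 := map_mx conjC B *m 1%:M *m B^T.
set GramG := map_mx conjC B *m G *m B^T.
have Gram1_unit : Gram1 \in unitmx.
  rewrite -row_free_unit -kermx_eq0; apply/eqP/row_matrixP => i; rewrite row0.
  set u := row i _; have /sub_kermxP uG : (u <= kermx Gram1)%MS by apply: row_sub.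
  have /eqP : form 1%:M (map_mx conjC u *m B) (map_mx conjC u *m B) = 0.
    by rewrite formB map_mxCK uG mul0mx mxE.
  by rewrite form1_eq0 mulmx_free_eq0 ?row_base_free // map_mx_eq0 => /eqP.
(* In the coordinates of [row_base V], relative eigenvectors are the eigenvectors of
   [GramG *m invmx Gram1]. *)
have [mu /eigenvalueP [v vE v0]] : exists mu, eigenvalue (GramG *m invmx Gram1) mu.
  by apply/eigenvalue_closed; rewrite lt0n mxrank_eq0.
exists (map_mx conjC v *m B); first by rewrite -(eq_row_base V) submxMl.
split; first by rewrite mulmx_free_eq0 ?row_base_free // map_mx_eq0.
exists mu => y; rewrite -(eq_row_base V) => /submxP [d ->].
rewrite !formB map_mxCK -/Gram1 -/GramG -[GramG](mulmxKV Gram1_unit).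
by rewrite mulmxA vE -!scalemxAl mxE.
Qed.

Section Anisotropic.
Variables (V : 'M[C]_n) (x : 'rV[C]_n).
Hypotheses (xV : (x <= V)%MS) (x_aniso : form G x x != 0) (x_rel : rel_eigvec V x).

Lemma rel_eigvec_form1 y : (y <= V)%MS -> form G x y = 0 -> form 1%:M x y = 0.
Proof.
have [mu xE] := x_rel; have mu0 : mu != 0.
  by apply: contraNneq x_aniso => mu0; rewrite xE // mu0 mul0r.
by move=> yV; rewrite xE // => /eqP; rewrite mulf_eq0 (negbTE mu0) => /eqP.
Qed.

Lemma rel_eigvec_capkerf y : self_adjoint G -> (y <= V :&: kerf G x)%MS ->
  rel_eigvec (V :&: kerf G x)%MS y -> rel_eigvec V y.
Proof.
move=> G_sa yV' [nu yE]; exists nu => z zV.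
have yV := submx_trans yV' (capmxSl _ _).
have xyG : form G x y = 0 by apply/eqP; rewrite -sub_kerf (submx_trans yV' (capmxSr _ _)).
have := yE _ (orth_proj_capkerf xV x_aniso zV).
rewrite !formBr !formZr [form G y x]form_sym // [form 1%:M y x]form_sym.
  2: exact: self_adjoint1.
by rewrite xyG rel_eigvec_form1 // !conjC0 !mulr0 !subr0.
Qed.

End Anisotropic.

Lemma exists_rel_eigbasis V : self_adjoint G -> nondeg_on G V ->
  exists b : 'I_(\rank V) -> 'rV[C]_n, orth_basis G V b /\ forall i, rel_eigvec V (b i).
Proof.
move=> G_sa; apply: exists_orth_basis => // {}V ndV V0.
have [x xV [x0 [mu xE]]] := exists_rel_eigvec V0.
have x_aniso : form G x x != 0.
  rewrite xE // mulf_eq0 form1_eq0 (negbTE x0) orbF.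
  by apply: contra_neq x0 => mu0; apply: ndV => // y yV; rewrite xE // mu0 mul0r.
have x_rel : rel_eigvec V x by exists mu.
exists x; split=> //; first exact: nondeg_on_capkerf.
by move=> y; apply: rel_eigvec_capkerf.
Qed.

End RelativeEigenvectors.

Section Signature.
Variables (C : numClosedFieldType) (n : nat).
Implicit Types (G M V P Q : 'M[C]_n) (x y w : 'rV[C]_n).

Definition posdef_on G V := forall w, (w <= V)%MS -> w != 0 -> 0 < form G w w.

Definition form_orth M P Q :=
  forall p q, (p <= P)%MS -> (q <= Q)%MS -> form M p q = 0.

Definition span_of k (b : 'I_k -> 'rV[C]_n) (S : {set 'I_k}) :=
  (\sum_(i in S) <<b i>>)%MS.

Definition pos_idx G k (b : 'I_k -> 'rV[C]_n) := [set i | 0 < form G (b i) (b i)].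

Section Family.
Variables (k : nat) (b : 'I_k -> 'rV[C]_n).
Implicit Types S T : {set 'I_k}.

Lemma sub_span_ofP S w :
  (w <= span_of b S)%MS -> exists c : 'I_k -> C, w = \sum_(i in S) c i *: b i.
Proof.
case/sub_sumsmxP => u ->; exists (fun i => (u i *m (<<b i>>)%MS *m pinvmx (b i)) 0 0).
apply: eq_bigr => i _; rewrite -mul_scalar_mx -mx11_scalar mulmxKpV //.
by rewrite (submx_trans (submxMl _ _)) ?genmxE.
Qed.

Lemma span_of_sup S i : i \in S -> (b i <= span_of b S)%MS.
Proof. by move=> iS; rewrite (sumsmx_sup i) ?genmxE. Qed.

Lemma span_of_sub S V : (forall i, i \in S -> (b i <= V)%MS) -> (span_of b S <= V)%MS.
Proof. by move=> bV; apply/sumsmx_subP => i iS; rewrite genmxE bV. Qed.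

Lemma rank_span_of S : (\rank (span_of b S) <= #|S|)%N.
Proof.
rewrite (leq_trans (mxrank_sum_leqif _).1) // -sum1_card leq_sum // => i _.
by rewrite /= genmxE rank_leq_row.
Qed.

Lemma form_span M S T (c d : 'I_k -> C) :
  form M (\sum_(i in S) c i *: b i) (\sum_(j in T) d j *: b j) =
  \sum_(i in S) \sum_(j in T) (c i)^* * d j * form M (b i) (b j).
Proof.
rewrite form_suml; apply: eq_bigr => i _; rewrite form_sumr.
by apply: eq_bigr => j _; rewrite formZl formZr mulrA.
Qed.

Lemma form_orth_span_of M S T : (forall i j, i != j -> form M (b i) (b j) = 0) ->
  [disjoint S & T] -> form_orth M (span_of b S) (span_of b T).
Proof.
move=> b_orth ST p q /sub_span_ofP [c ->] /sub_span_ofP [d ->].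
rewrite form_span big1 // => i iS; rewrite big1 // => j jT.
by rewrite b_orth ?mulr0 //; apply: contraTneq jT => <-; rewrite (disjointFr ST iS).
Qed.

Lemma posdef_span_of G S : (forall i j, i != j -> form G (b i) (b j) = 0) ->
  (forall i, i \in S -> 0 < form G (b i) (b i)) -> posdef_on G (span_of b S).
Proof.
move=> b_orth b_pos w /sub_span_ofP [c ->] w0.
pose t i := (c i)^* * c i * form G (b i) (b i).
have t_ge0 i : i \in S -> 0 <= t i.
  by move=> iS; apply: mulr_ge0; [rewrite mulrC mul_conjC_ge0 | exact: ltW (b_pos i iS)].
rewrite form_span (eq_bigr t) => [|i iS]; last first.
  rewrite (bigD1 i) //= big1 ?addr0 // => j /andP [_ ji].
  by rewrite b_orth ?mulr0 // eq_sym.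
rewrite lt_def sumr_ge0 // andbT; apply: contra w0 => /eqP /(psumr_eq0P t_ge0) t0.
apply/eqP/big1 => i iS; move/eqP: (t0 i iS).
rewrite mulf_eq0 (gt_eqF (b_pos i iS)) orbF mulrC mul_conjC_eq0 => /eqP ->.
exact: scale0r.
Qed.
End Family.


Lemma pos_idxN G V k (b : 'I_k -> 'rV[C]_n) : self_adjoint G -> orth_basis G V b ->
  pos_idx (- G) b = ~: pos_idx G b.
Proof.
move=> G_sa [_ _ b_aniso]; apply/setP => i; rewrite !inE formNm oppr_gt0.
have := b_aniso i; case: (real_ltgtP (form_real _ G_sa) (real0 C)) => //.
Qed.

Definition sign_split G V P Q :=
  [/\ (P + Q == V)%MS, posdef_on G P & posdef_on (- G) Q].

Lemma sign_splitN G V P Q : sign_split G V P Q -> sign_split (- G) V Q P.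
Proof. by case=> PQV Ppos Qneg; split; rewrite ?opprK // addsmxC. Qed.

Lemma posdef_cap0 G P Q : posdef_on G P -> posdef_on (- G) Q -> (P :&: Q = 0)%MS.
Proof.
move=> Ppos Qneg; apply/eqP/rowV0P => w; rewrite sub_capmx => /andP [wP wQ].
apply: contraTeq isT => w0; have := Qneg w wQ w0; rewrite formNm oppr_gt0.
by move/lt_trans/(_ (Ppos w wP w0)); rewrite ltxx.
Qed.

Lemma sign_split_rank_le G V P Q P' Q' :
  sign_split G V P Q -> sign_split G V P' Q' -> (\rank P <= \rank P')%N.
Proof.
case=> /andP [PQV _] Ppos _ [/andP [PQ'V VPQ'] _ Q'neg].
move: PQV PQ'V; rewrite !addsmx_sub => /andP [PV _] /andP [_ Q'V].
have PQ'_sub : (P + Q' <= P' + Q')%MS by rewrite (submx_trans _ VPQ') // addsmx_sub PV.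
have := leq_trans (mxrankS PQ'_sub) (mxrank_adds_leqif P' Q').1.
by rewrite mxrank_disjoint_sum ?leq_add2r // (posdef_cap0 Ppos Q'neg).
Qed.

Lemma sign_split_rank G V P Q P' Q' : sign_split G V P Q -> sign_split G V P' Q' ->
  \rank P = \rank P' /\ \rank Q = \rank Q'.
Proof.
move=> s s'; have [sN sN'] := (sign_splitN s, sign_splitN s').
by split; apply/anti_leq/andP; split; apply: sign_split_rank_le; eassumption.
Qed.

Lemma sign_split_basis G V k (b : 'I_k -> 'rV[C]_n) :
    self_adjoint G -> orth_basis G V b ->
  sign_split G V (span_of b (pos_idx G b)) (span_of b (pos_idx (- G) b)).
Proof.
move=> G_sa b_basis; have [/andP [_ Vb] b_orth _] := b_basis.
split; last 2 first.
- by apply: posdef_span_of => // i; rewrite inE.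
- apply: posdef_span_of => [i j ij|i]; last by rewrite inE.
  by rewrite formNm b_orth ?oppr0.
apply/andP; split.
  rewrite addsmx_sub; apply/andP.
  by split; apply: span_of_sub => i _; exact: orth_basis_sub b_basis i.
apply: submx_trans Vb _; apply/row_subP => i; rewrite rowK.
have [ipos|ineg] := boolP (i \in pos_idx G b).
  by rewrite (submx_trans _ (addsmxSl _ _)) // span_of_sup.
by rewrite (submx_trans _ (addsmxSr _ _)) // span_of_sup // (pos_idxN G_sa b_basis) inE.
Qed.

Lemma sign_split_card G V P Q (b : 'I_(\rank V) -> 'rV[C]_n) :
    self_adjoint G -> orth_basis G V b -> sign_split G V P Q ->
  \rank P = #|pos_idx G b| /\ \rank Q = #|pos_idx (- G) b|.
Proof.
move=> G_sa b_basis s; have [PQV Ppos Qneg] := s.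
have [rP rQ] := sign_split_rank s (sign_split_basis G_sa b_basis).
have card_idx : (#|pos_idx G b| + #|pos_idx (- G) b| = \rank V)%N.
  by rewrite (pos_idxN G_sa b_basis) cardsC card_ord.
have rank_sum : (\rank P + \rank Q = \rank V)%N.
  by rewrite -mxrank_disjoint_sum ?(eqmx_rank PQV) ?(posdef_cap0 Ppos Qneg).
have := rank_span_of b (pos_idx G b); have := rank_span_of b (pos_idx (- G) b).
(* [lia] only treats the cardinals as atoms once they are named. *)
rewrite -rP -rQ; move: card_idx rank_sum; set c := #|_|; set d := #|_|; lia.
Qed.

Definition signature_decomp G V P Q :=
  [/\ sign_split G V P Q, form_orth G P Q & form_orth 1%:M P Q].

Lemma form_orthC M P Q : self_adjoint M -> form_orth M P Q -> form_orth M Q P.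
Proof. by move=> M_sa PQ q p qQ pP; rewrite form_sym // PQ ?conjC0. Qed.

Lemma signature_decompN G V P Q :
  self_adjoint G -> signature_decomp G V P Q -> signature_decomp (- G) V Q P.
Proof.
move=> G_sa [s oG o1]; split; first exact: sign_splitN.
  by move=> q p qQ pP; rewrite formNm (form_orthC G_sa oG) ?oppr0.
exact: form_orthC (self_adjoint1 _ _) o1.
Qed.

Lemma rel_eigvecN G V x : rel_eigvec G V x -> rel_eigvec (- G) V x.
Proof. by case=> mu xE; exists (- mu) => y yV; rewrite formNm xE // mulNr. Qed.

Lemma rel_eigvec_sub G V P Q x : signature_decomp G V P Q -> (x <= V)%MS ->
  0 < form G x x -> rel_eigvec G V x -> (x <= P)%MS.
Proof.
move=> [[/andP [PQV VPQ] _ Qneg] oG o1] xV x_pos [mu xE].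
have QV : (Q <= V)%MS by move: PQV; rewrite addsmx_sub => /andP [].
have mu_pos : 0 < mu.
  have x0 : x != 0 by apply: contraTneq x_pos => ->; rewrite form0l ltxx.
  by move: x_pos; rewrite xE // pmulr_lgt0 // form1_gt0.
case/sub_addsmxP: (submx_trans xV VPQ) => -[u v] /= xPQ.
have [pP qQ] := (submxMl u P, submxMl v Q).
suff q0 : v *m Q = 0 by rewrite xPQ q0 addr0.
apply: contraTeq isT => q0; have := xE _ (submx_trans qQ QV).
rewrite xPQ !formDl oG // o1 // !add0r => qE.
by have := Qneg _ qQ q0; rewrite formNm oppr_gt0 qE pmulr_rlt0 // le_gtF ?form1_ge0.
Qed.

Theorem signature_decomposition G V (b : 'I_(\rank V) -> 'rV[C]_n) :
    self_adjoint G -> nondeg_on G V -> orth_basis G V b ->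
  exists P Q, [/\ signature_decomp G V P Q,
    \rank P = #|pos_idx G b|, \rank Q = #|pos_idx (- G) b|
    & forall P' Q', signature_decomp G V P' Q' -> (P' == P)%MS /\ (Q' == Q)%MS].
Proof.
move=> G_sa ndV b_basis.
have [c [c_basis c_rel]] := exists_rel_eigbasis G_sa ndV.
have [_ c_orth c_aniso] := c_basis; have c_sub := orth_basis_sub c_basis.
have c_orth1 i j : i != j -> form 1%:M (c i) (c j) = 0.
  by move=> ij; apply: rel_eigvec_form1 (c_orth i j ij).
have disj : [disjoint pos_idx G c & pos_idx (- G) c].
  by rewrite (pos_idxN G_sa c_basis) disjoints_subset setCK.
set P := span_of c (pos_idx G c); set Q := span_of c (pos_idx (- G) c).
have dec : signature_decomp G V P Q.
  by split; [exact: sign_split_basis | exact: form_orth_span_of..].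
have [s _ _] := dec; have [rP rQ] := sign_split_card G_sa b_basis s.
exists P, Q; split=> // P' Q' dec'; have [s' _ _] := dec'.
have [rPP' rQQ'] := sign_split_rank s s'.
have PP' : (P <= P')%MS.
  apply: span_of_sub => i; rewrite inE => i_pos.
  exact: rel_eigvec_sub dec' (c_sub i) i_pos (c_rel i).
have QQ' : (Q <= Q')%MS.
  apply: span_of_sub => i; rewrite inE => i_neg.
  have dec'N := signature_decompN G_sa dec'.
  exact: rel_eigvec_sub dec'N (c_sub i) i_neg (rel_eigvecN (c_rel i)).
by rewrite PP' QQ' -(mxrank_leqif_sup PP').2 -(mxrank_leqif_sup QQ').2 rPP' rQQ' !eqxx.
Qed.

End Signature.

Lemma diagonalizable_tr (F : fieldType) m (A : 'M[F]_m) :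
  diagonalizable A -> diagonalizable A^T.
Proof.
case=> P P_unit /(similar_diagLR P_unit) [d ->].
have Q_unit : (invmx P)^T \in unitmx by rewrite unitmx_tr unitmx_inv.
exists (invmx P)^T => //; apply/(similar_diagLR Q_unit); exists d.
by rewrite !conjVmx // trmx_inv invmxK !trmx_mul tr_diag_mx trmx_inv mulmxA.
Qed.

Section EigenBasis.
Variables (C : numClosedFieldType) (N : nat).
Local Notation n := (N + N)%N.
Variables (G h D : 'M[C]_n) (S : {pred C}).
Hypotheses (G_sa : self_adjoint G) (h_sa : self_adjoint h) (GD : G *m D = h).
Hypothesis D_real : forall a, eigenvalue D a -> a \is Num.real.
Local Notation eigS v := (exists2 w, w \in S & eigvec D w v).

Lemma is_span_ofW (P : 'rV[C]_n -> Prop) W : is_span_of P W -> spanned_by P W.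
Proof. by case=> PW spanW U PU; apply: spanW => v Pv; apply: PU (PW v Pv) Pv. Qed.

Lemma eigvec_eigenvalue a v : eigvec D a v -> eigenvalue D a.
Proof.
case=> v0 vE; rewrite /eigenvalue /eigenspace kermx_eq0 row_free_unit.
apply: contra v0 => Da_unit; rewrite -trmx_eq0.
have : (D - a%:M) *m v^T = 0 by rewrite mulmxBl vE mul_scalar_mx subrr.
by move/(congr1 (mulmx (invmx (D - a%:M)))); rewrite mulKmx // mulmx0 => ->.
Qed.

Lemma eigvec_orth a b x y :
  eigvec D a x -> D *m y^T = b *: y^T -> a != b -> form G x y = 0.
Proof.
move=> xa yb ab.
have hE z w c : D *m w^T = c *: w^T -> form h z w = c * form G z w.
  by move=> wE; rewrite /form -GD mulmxA -(mulmxA _ D) wE -scalemxAr mxE.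
have hxy : form h x y = a * form G x y.
  rewrite [LHS]form_sym // (hE _ _ _ xa.2) rmorphM /=.
  by rewrite (conj_Creal (D_real (eigvec_eigenvalue xa))) -form_sym.
move/eqP: hxy; rewrite (hE _ _ _ yb) -subr_eq0 -mulrBl mulf_eq0 subr_eq0 eq_sym.
by rewrite (negbTE ab) => /eqP.
Qed.

Lemma nondeg_on_eigspan W : G \in unitmx -> diagonalizable D ->
  is_span_of (fun v => eigS v) W -> nondeg_on G W.
Proof.
(* Every vector is a sum of eigenvectors of D: those with eigenvalue in S lie in W, the
   others are G-orthogonal to W. *)
move=> G_unit Ddiag W_span x xW xW0.
have [Wgen _] := W_span; have spanW := is_span_ofW W_span.
apply: (nondeg_unitmx G_unit) (submx1 x) _ => y _; apply/eqP.
have [rs _ rsE] := (@diagonalizablePeigen _ _ D^T).1 (diagonalizable_tr Ddiag).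
rewrite -sub_kerf (submx_trans (submx1 y)) // -rsE.
elim: rs {rsE} => [|r rs IH]; first by rewrite big_nil sub0mx.
rewrite big_cons addsmx_sub IH andbT; apply/rV_subP => z /eigenspaceP zE.
have {}zE : D *m z^T = r *: z^T by rewrite -[D]trmxK -trmx_mul zE linearZ.
have [->|z0] := eqVneq z 0; first by rewrite sub_kerf form0r.
rewrite sub_kerf; have [rS|rS] := boolP (r \in S).
  by rewrite xW0 // Wgen //; exists r.
suff zx : form G z x = 0 by rewrite form_sym // zx conjC0.
apply: (spanned_by_form_eq0 spanW) xW => v _ [w wS [_ vE]].
by apply: (eigvec_orth (conj z0 zE)) vE _; apply: contraNneq rS => ->.
Qed.

Lemma exists_anisotropic_eigvec V : V != 0 -> nondeg_on G V ->
  spanned_by (fun v => eigS v) V -> exists x, [/\ (x <= V)%MS, eigS x & form G x x != 0].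
Proof.
(* Otherwise polarization inside eigenspaces and orthogonality across them would make
   the form vanish on V. *)
move=> V0 ndV spanV; apply: NNPP => no_aniso.
have iso a x : a \in S -> (x <= V)%MS -> D *m x^T = a *: x^T -> form G x x = 0.
  move=> aS xV xE; have [->|x0] := eqVneq x 0; first exact: form0l.
  by apply/eqP/negPn/negP => x_aniso; apply: no_aniso; exists x; split=> //; exists a.
have eig_orth x y : (x <= V)%MS -> (y <= V)%MS -> eigS x -> eigS y -> form G x y = 0.
  move=> xV yV [a aS [x0 xE]] [b bS [_ yE]].
  have [ab_eq|ab] := eqVneq a b; last exact: (eigvec_orth (conj x0 xE)) yE ab.
  subst b.
  have iso_comb c : form G (x + c *: y) (x + c *: y) = 0.
    apply: (iso a) => //; first by rewrite addmx_sub ?scalemx_sub.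
    rewrite linearD linearZ /= mulmxDr -scalemxAr xE yE.
    by rewrite scalerDr scalerA mulrC -scalerA.
  apply: form_polar; [exact: iso xE | exact: iso yE | | exact: iso_comb].
  by rewrite -[y in x + y]scale1r iso_comb.
have V_iso x : (x <= V)%MS -> forall y, (y <= V)%MS -> form G x y = 0.
  move=> xV; apply: (spanned_by_form_eq0 spanV) => v vV v_eig.
  rewrite form_sym // (spanned_by_form_eq0 spanV _ xV) ?conjC0 // => u uV u_eig.
  exact: eig_orth.
by case/negP: V0; apply/rowV0P => v vV; apply: ndV vV (V_iso v vV).
Qed.

Lemma eigvec_orth_proj x v : eigS x -> form G x x != 0 -> eigS v ->
  orth_proj G x v = 0 \/ eigS (orth_proj G x v).
Proof.
move=> [a aS [x0 xE]] x_aniso [b bS [v0 vE]].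
have [ab_eq|ab] := eqVneq a b; last first.
  right; exists b => //.
  by rewrite /orth_proj (eigvec_orth (conj x0 xE) vE ab) mul0r scale0r subr0.
subst b; have [->|p0] := eqVneq (orth_proj G x v) 0; [by left | right; exists a => //].
split=> //; rewrite /orth_proj linearB linearZ /= mulmxBr -scalemxAr xE vE.
by rewrite scalerBr scalerA mulrC -scalerA.
Qed.

Lemma exists_orth_eigbasis W : nondeg_on G W -> spanned_by (fun v => eigS v) W ->
  exists b : 'I_(\rank W) -> 'rV[C]_n, orth_basis G W b /\ forall i, eigS (b i).
Proof.
move=> ndW spanW.
apply: (@exists_orth_basis _ _ G G_sa
  (fun V => nondeg_on G V /\ spanned_by (fun v => eigS v) V) (fun _ v => eigS v)).
  move=> V [ndV spanV] V0.
  have [x [xV x_eig x_aniso]] := exists_anisotropic_eigvec V0 ndV spanV.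
  exists x; split=> //; split; first exact: nondeg_on_capkerf.
  by apply: spanned_by_capkerf => // v _ v_eig; apply: eigvec_orth_proj.
by split.
Qed.

End EigenBasis.

Section Tauz.
Variables (C : numClosedFieldType) (N : nat).
Local Notation n := (N + N)%N.
Local Notation G := (tauz C N).
Implicit Types (x y : 'rV[C]_n) (W P Q : 'M[C]_n).

Lemma tauzK : G *m G = 1%:M.
Proof.
rewrite /tauz mulmx_block !mulmx0 !mul0mx mulmx1 mulmxN mulmx1 opprK !addr0 !add0r.
by rewrite -scalar_mx_block.
Qed.

Lemma tauz_unitmx : G \in unitmx.
Proof. exact: (mulmx1_unit tauzK).1. Qed.

Lemma tauz_self_adjoint : self_adjoint G.
Proof.
rewrite /self_adjoint /tauz map_block_mx tr_block_mx !map_mx0 !trmx0.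
by rewrite map_mxN map_mx1 !linearN /= trmx1.
Qed.

Lemma self_adjoint_hermitian (h : 'M[C]_n) : hermitian_mx h -> self_adjoint h.
Proof. by move=> h_herm; apply/matrixP => i j; rewrite !mxE h_herm conjCK. Qed.

Lemma symplE x y : sympl x y = form G x y.
Proof.
by rewrite /sympl /hip /form -mulmxA mxE; apply: eq_bigr => i _; rewrite !mxE.
Qed.

Lemma hipE x y : hip x y = form 1%:M x y.
Proof. by rewrite /hip /form mulmx1 mxE; apply: eq_bigr => i _; rewrite !mxE. Qed.

Lemma good_decompP W P Q Rp Rm : good_decomp W P Q Rp Rm <->
  [/\ signature_decomp G W P Q, \rank P = Rp & \rank Q = Rm].
Proof.
split=> [[[PQW _ rP rQ] [Ppos Qneg PQ0]] | [[[PQW Ppos Qneg] oG o1] rP rQ]].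
  have PQ_orth p q : (p <= P)%MS -> (q <= Q)%MS -> form G p q = 0 /\ form 1%:M p q = 0.
    move=> pP qQ; have [->|p0] := eqVneq p 0; first by rewrite !form0l.
    have [->|q0] := eqVneq q 0; first by rewrite !form0r.
    by rewrite -symplE -hipE; apply: PQ0.
  split=> //; split; first split=> // w wX w0.
  - by rewrite -symplE; apply: Ppos.
  - by rewrite formNm -symplE oppr_gt0; apply: Qneg.
  - by move=> p q pP qQ; case: (PQ_orth p q pP qQ).
  - by move=> p q pP qQ; case: (PQ_orth p q pP qQ).
split; split=> //.
- exact/mxdirect_addsP/(posdef_cap0 Ppos Qneg).
- by move=> w wP w0; rewrite symplE; apply: Ppos.
- by move=> w wQ w0; rewrite symplE -oppr_gt0 -formNm; apply: Qneg.
- by move=> p q pP qQ _ _; rewrite symplE hipE oG ?o1.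
Qed.

End Tauz.

Unset Implicit Arguments.
Theorem claim1 (C : numClosedFieldType) (N : nat) (h : 'M[C]_(N + N))
  (w0 : C) (W : 'M[C]_(N + N)) :
  hermitian_mx h ->
  diagonalizable (tauz C N *m h) ->
  (forall a, eigenvalue (tauz C N *m h) a -> a \is Num.real) ->
  0 < w0 ->
  ~~ eigenvalue (tauz C N *m h) w0 -> ~~ eigenvalue (tauz C N *m h) (- w0) ->
  is_span_of (fun v => exists2 w, w0 < w & eigvec (tauz C N *m h) w v) W ->
  (exists b : 'I_(\rank W) -> 'rV[C]_(N + N),
      good_eigenbasis (tauz C N *m h) w0 W b) /\
  (forall b : 'I_(\rank W) -> 'rV[C]_(N + N),
      good_eigenbasis (tauz C N *m h) w0 W b ->
      let Rp := #|[set i | 0 < sympl (b i) (b i)]| in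
      let Rm := #|[set i | sympl (b i) (b i) < 0]| in
      (Rp + Rm = \rank W)%N /\
      exists Wpp Wpm : 'M[C]_(N + N),
        good_decomp W Wpp Wpm Rp Rm /\
        forall Wpp' Wpm' : 'M[C]_(N + N), good_decomp W Wpp' Wpm' Rp Rm ->
          (Wpp' == Wpp)%MS /\ (Wpm' == Wpm)%MS).
Proof.
move=> h_herm D_diag D_real _ _ _ W_span.
set G := tauz C N; set D := G *m h.
have G_sa : self_adjoint G := tauz_self_adjoint C N.
have h_sa := self_adjoint_hermitian h_herm.
have GD : G *m D = h by rewrite mulmxA tauzK mul1mx.
have ndW : nondeg_on G W.
  exact: (nondeg_on_eigspan (S := [pred w | w0 < w]) G_sa h_sa GD D_real
            (tauz_unitmx C N) D_diag W_span).
split.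
  have [b [[bW b_orth b_aniso] b_eig]] :=
    exists_orth_eigbasis G_sa h_sa GD D_real ndW (is_span_ofW W_span).
  by exists b; split=> // [i j ij|i]; rewrite symplE; [exact: b_orth | exact: b_aniso].
move=> b [b_eig bW b_orth b_aniso] Rp Rm.
have b_basis : orth_basis G W b.
  by split=> // [i j ij|i]; rewrite -symplE; [exact: b_orth | exact: b_aniso].
have RpE : Rp = #|pos_idx G b| by apply: eq_card => i; rewrite !inE symplE.
have RmE : Rm = #|pos_idx (- G) b|.
  by apply: eq_card => i; rewrite !inE symplE formNm oppr_gt0.
split; first by rewrite RpE RmE (pos_idxN G_sa b_basis) cardsC card_ord.
have [P [Q [dec rP rQ P_uniq]]] := signature_decomposition G_sa ndW b_basis.
exists P, Q; split; first by apply/good_decompP; rewrite RpE RmE.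
by move=> P' Q' /good_decompP [dec' _ _]; apply: P_uniq.
Qed.
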